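(* Let $M$ be a smooth manifold of dimension $n\geq2$, $\Gamma$ a symmetric extended affine connection, $V$ a regular extended vector field and $Q$ an extended covector field on $M$. Let $T^k_{ij}(x,p)=T^k_{ji}(x,p)$ be the components of a smooth symmetric extended tensor field of type $(1,2)$, and set $\Gamma'^k_{ij}=\Gamma^k_{ij}+T^k_{ij}$, $Q'_i=Q_i-\sum_{k,s}T^k_{is}p_kV^s$. Then $(V,Q)$ satisfies the weak normality equations $\sum_r\alpha^rP^k_r=0$, $\sum_r\eta_rP^r_k=0$ ($k=1,\dots,n$) computed with respect to $\Gamma$ at all points of $T^*M$ with $p\neq0$ if and only if $(V,Q')$ satisfies the weak normality equations computed with respect to $\Gamma'$ at all such points.
   Context: Local coordinates $x^i$ on $M$ induce $(x,p)$ on $T^*M$; with $S^i_j=\partial x^i/\partial\tilde x^j$, $T^i_j=\partial\tilde x^i/\partial x^j$, $\tilde p_j=\sum_iS^i_jp_i$, a symmetric extended affine connection is given by smooth $\Gamma^k_{ij}(x,p)=\Gamma^k_{ji}(x,p)$ with $\Gamma^k_{ij}=\sum S^k_mT^a_iT^c_j\tilde\Gamma^m_{ac}+\sum_mS^k_m\partial T^m_i/\partial x^j$; extended tensor fields have components that are smooth functions of $(x,p)$ transforming tensorially. The pair $(V,Q)$ with $\Gamma$ defines the Newtonian system $\dot x^i=V^i$, $\dot p_i-\sum\Gamma^k_{ij}p_k\dot x^j=Q_i$. All sums run from $1$ to $n$. For a given connection: $\tilde\nabla^mX=\partial X/\partial p_m$ componentwise; $\nabla_mX^{i_1\dots i_r}_{j_1\dots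 j_s}=\frac{\partial X^{\dots}_{\dots}}{\partial x^m}+\sum_{b,c}p_c\Gamma^c_{mb}\frac{\partial X^{\dots}_{\dots}}{\partial p_b}+\sum_{k=1}^r\sum_a\Gamma^{i_k}_{ma}X^{i_1\dots a\dots i_r}_{j_1\dots j_s}-\sum_{k=1}^s\sum_b\Gamma^b_{mj_k}X^{i_1\dots i_r}_{j_1\dots b\dots j_s}$; $R^k_{rij}=\frac{\partial\Gamma^k_{jr}}{\partial x^i}-\frac{\partial\Gamma^k_{ir}}{\partial x^j}+\sum_m\Gamma^k_{im}\Gamma^m_{jr}-\sum_m\Gamma^k_{jm}\Gamma^m_{ir}+\sum_{m,\alpha}p_\alpha\Gamma^\alpha_{mi}\frac{\partial\Gamma^k_{jr}}{\partial p_m}-\sum_{m,\alpha}p_\alpha\Gamma^\alpha_{mj}\frac{\partial\Gamma^k_{ir}}{\partial p_m}$; $D^{kr}_{ij}=-\partial\Gamma^k_{ij}/\partial p_r$. Regularity of $V$: $(x,p)\mapsto(x,V(x,p))$ is a diffeomorphism $T^*M\to TM$; $V=0$ iff $p=0$; with $W^s=\sum_r(\partial V^r/\partial p_s)p_r$, $\Omega=\sum_sp_sW^s\neq0$ for $p\neq0$. Weak normality equations data (for a given connection and covector field $Q$): $P^i_j=\delta^i_j-W^ip_j/\Omega$; $U_s=\sum_r\nabla_sV^rp_r+Q_s$; $\alpha^k=\sum_r\tilde\nabla^kV^rU_r+\sum_rV^r\nabla_rW^k+\sum_rQ_r\tilde\nabla^rW^k+\sum_rW^r\tilde\nabla^kQ_r-\sum_{r,s,q}p_sD^{sk}_{rq}W^rV^q$;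 $\beta_k=\sum_rV^r\nabla_rU_k+\sum_rQ_r\tilde\nabla^rU_k+\sum_rU_r\nabla_kV^r+\sum_rW^r\nabla_kQ_r-\sum_{r,s,m}(R^s_{rmk}V^m-D^{sm}_{rk}Q_m)W^rp_s$; $\eta_k=\beta_k-U_k\sum_s\alpha^sp_s/\Omega$. *)

(* Everything is expressed in one coordinate chart
   U (open subset of R^n) of M, with T*U = U x R^n, coordinates (x,p). *)
From HB Require Import structures.
From mathcomp Require Import all_boot all_order all_algebra.
From mathcomp Require Import all_classical all_reals all_analysis.
Set Implicit Arguments. Unset Strict Implicit. Unset Printing Implicit Defensive.
Import Order.TTheory GRing.Theory Num.Theory.
Import numFieldNormedType.Exports.
Local Open Scope classical_set_scope.
Local Open Scope ring_scope.

Section Defs.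
Variables (R : realType) (n : nat).

Definition fn := 'rV[R]_n -> 'rV[R]_n -> R.

Definition ev (i : 'I_n) : 'rV[R]_n := delta_mx 0 i.

Definition pc (p : 'rV[R]_n) (i : 'I_n) : R := p 0 i.

Definition dx (m : 'I_n) (f : fn) : fn := fun x p => derive (fun y => f y p) x (ev m).
Definition dp (m : 'I_n) (f : fn) : fn := fun x p => derive (fun q => f x q) p (ev m).

Definition pd (d : bool * 'I_n) (f : fn) : fn := if d.1 then dx d.2 f else dp d.2 f.
Fixpoint iterD (ds : seq (bool * 'I_n)) (f : fn) : fn :=
  match ds with [::] => f | d :: ds' => pd d (iterD ds' f) end.

Definition smooth_on (U : set 'rV[R]_n) (f : fn) : Prop :=
  forall ds : seq (bool * 'I_n),
    {within U `*` setT, continuous (fun z : 'rV[R]_n * 'rV[R]_n => iterD ds f z.1 z.2)} /\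
    (forall (i : 'I_n) x p, U x ->
       derivable (fun y => iterD ds f y p) x (ev i) /\
       derivable (fun q => iterD ds f x q) p (ev i)).

Definition kdelta (i j : 'I_n) : R := if i == j then 1 else 0.

(* components: Gam k i j = Gamma^k_{ij}; V i = V^i; Q i = Q_i *)
Variables (Gam : 'I_n -> 'I_n -> 'I_n -> fn) (V Q : 'I_n -> fn).

Definition nabla_vec (m : 'I_n) (X : 'I_n -> fn) (i : 'I_n) : fn := fun x p =>
  dx m (X i) x p
  + \sum_(b < n) \sum_(c < n) pc p c * Gam c m b x p * dp b (X i) x p
  + \sum_(a < n) Gam i m a x p * X a x p.

Definition nabla_cov (m : 'I_n) (X : 'I_n -> fn) (j : 'I_n) : fn := fun x p =>
  dx m (X j) x p
  + \sum_(b < n) \sum_(c < n) pc p c * Gam c m b x p * dp b (X j) x p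
  - \sum_(b < n) Gam b m j x p * X b x p.

Definition curv (k r i j : 'I_n) : fn := fun x p =>
  dx i (Gam k j r) x p - dx j (Gam k i r) x p
  + \sum_(m < n) Gam k i m x p * Gam m j r x p
  - \sum_(m < n) Gam k j m x p * Gam m i r x p
  + \sum_(m < n) \sum_(a < n) pc p a * Gam a m i x p * dp m (Gam k j r) x p
  - \sum_(m < n) \sum_(a < n) pc p a * Gam a m j x p * dp m (Gam k i r) x p.

Definition Dt (k r i j : 'I_n) : fn := fun x p => - dp r (Gam k i j) x p.

Definition Wv (s : 'I_n) : fn := fun x p => \sum_(r < n) dp s (V r) x p * pc p r.
Definition Omega : fn := fun x p => \sum_(s < n) pc p s * Wv s x p.
Definition Pm (i j : 'I_n) : fn := fun x p => kdelta i j - Wv i x p * pc p j / Omega x p.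
Definition Uc (s : 'I_n) : fn := fun x p =>
  \sum_(r < n) nabla_vec s V r x p * pc p r + Q s x p.

Definition alpha (k : 'I_n) : fn := fun x p =>
  \sum_(r < n) dp k (V r) x p * Uc r x p
  + \sum_(r < n) V r x p * nabla_vec r Wv k x p
  + \sum_(r < n) Q r x p * dp r (Wv k) x p
  + \sum_(r < n) Wv r x p * dp k (Q r) x p
  - \sum_(r < n) \sum_(s < n) \sum_(q < n) pc p s * Dt s k r q x p * Wv r x p * V q x p.

Definition beta (k : 'I_n) : fn := fun x p =>
  \sum_(r < n) V r x p * nabla_cov r Uc k x p
  + \sum_(r < n) Q r x p * dp r (Uc k) x p
  + \sum_(r < n) Uc r x p * nabla_vec k V r x p
  + \sum_(r < n) Wv r x p * nabla_cov k Q r x p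
  - \sum_(r < n) \sum_(s < n) \sum_(m < n)
      (curv s r m k x p * V m x p - Dt s m r k x p * Q m x p) * Wv r x p * pc p s.

Definition eta (k : 'I_n) : fn := fun x p =>
  beta k x p - Uc k x p * (\sum_(s < n) alpha s x p * pc p s) / Omega x p.

Definition weak_normal_at (x p : 'rV[R]_n) : Prop :=
  forall k : 'I_n,
    \sum_(r < n) alpha r x p * Pm k r x p = 0 /\
    \sum_(r < n) eta r x p * Pm r k x p = 0.

End Defs.

Section Hyps.
Variables (R : realType) (n : nat) (U : set 'rV[R]_n).

Definition sym_connection (Gam : 'I_n -> 'I_n -> 'I_n -> fn R n) : Prop :=
  (forall k i j, smooth_on U (Gam k i j)) /\
  (forall k i j x p, U x -> Gam k i j x p = Gam k j i x p).

Definition regular (V : 'I_n -> fn R n) : Prop :=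
  (forall i, smooth_on U (V i)) /\
  (* (x,p) |-> (x, V(x,p)) is a diffeomorphism T*U -> TU *)
  (exists G : 'I_n -> fn R n,
     (forall i, smooth_on U (G i)) /\
     (forall x p, U x -> \row_i G i x (\row_j V j x p) = p) /\
     (forall x v, U x -> \row_j V j x (\row_i G i x v) = v)) /\
  (forall x p, U x -> ((\row_i V i x p == 0) = (p == 0))) /\
  (forall x p, U x -> p != 0 -> Omega V x p != 0).
End Hyps.

(* For a symmetric connection every quantity entering the weak
   normality equations depends on Gamma only through g_ab = p_c Gamma^c_ab:
   with the horizontal derivative h_m = d/dx^m + g_mb d/dp_b one has
   U_k = p_r h_k V^r + g_ka V^a + Q_k and p_s R^s_rmk = h_m g_kr - h_k g_mr,
   and all explicit Gamma-terms cancel by symmetry.  Replacing Gamma by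
   Gamma + T replaces g by g + t, t_ab = p_c T^c_ab, and Q by Q - t V; the
   derivative along the Newtonian system, V^r h_r + Q_r d/dp_r, does not change
   (both data define the same system).  Consequently U' = U + t W, alpha' = alpha
   and beta'_k = beta_k + t_kr alpha^r, so that eta'_k = eta_k + t_kr alpha^s P^r_s:
   the second group of equations changes only by combinations of the first. *)

From Pilot Require Import Defs.
From HB Require Import structures.
From mathcomp Require Import all_boot all_order all_algebra.
From mathcomp Require Import all_classical all_reals all_analysis.
From mathcomp Require Import ring.
Import Order.TTheory GRing.Theory Num.Theory.
Import numFieldNormedType.Exports.
Local Open Scope classical_set_scope.
Local Open Scope ring_scope.
Set Implicit Arguments. Unset Strict Implicit. Unset Printing Implicit Defensive.

(** * Reindexing finite sums *)

Lemma sum_contract_sym (R : comRingType) n (t : 'I_n -> 'I_n -> R) (a b : 'I_n -> R) :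
  (forall i j, t i j = t j i) ->
  \sum_(i < n) a i * (\sum_(j < n) t i j * b j)
  = \sum_(i < n) b i * (\sum_(j < n) t i j * a j).
Proof.
move=> tsym; under eq_bigr => i _ do rewrite mulr_sumr.
rewrite exchange_big; apply: eq_bigr => j _; rewrite mulr_sumr.
by apply: eq_bigr => i _; rewrite tsym; ring.
Qed.

Lemma sum_contractA (R : comRingType) n (a b : 'I_n -> R) (F : 'I_n -> 'I_n -> R) :
  \sum_(i < n) (\sum_(j < n) a j * F j i) * b i
  = \sum_(j < n) a j * \sum_(i < n) F j i * b i.
Proof.
under eq_bigr => i _ do rewrite mulr_suml.
rewrite exchange_big; apply: eq_bigr => j _; rewrite mulr_sumr.
by apply: eq_bigr => i _; rewrite mulrA.
Qed.

Lemma sum_contract_swap (R : comRingType) n (a c : 'I_n -> R) (D : 'I_n -> 'I_n -> R) :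
  \sum_(i < n) c i * (\sum_(j < n) a j * D i j)
  = \sum_(j < n) a j * \sum_(i < n) c i * D i j.
Proof.
under eq_bigr => i _ do rewrite mulr_sumr.
rewrite exchange_big; apply: eq_bigr => j _; rewrite mulr_sumr.
by apply: eq_bigr => i _; rewrite mulrCA.
Qed.

(** * Partial derivatives on U x R^n *)

Section DirectionalDerivative.
Variables (R : realType) (n : nat).
Implicit Types (x v : 'rV[R]_n).

Let sum_funE (F : 'I_n -> 'rV[R]_n -> R) :
  (fun y => \sum_(i < n) F i y) = \sum_(i < n) F i.
Proof. by apply/funext => y; rewrite fct_sumE. Qed.

Lemma derive_sum_fun (F : 'I_n -> 'rV[R]_n -> R) x v :
  (forall i, derivable (F i) x v) ->
  derive (fun y => \sum_(i < n) F i y) x v = \sum_(i < n) derive (F i) x v.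
Proof. by move=> dF; rewrite sum_funE derive_sum. Qed.

Lemma derivable_sum_fun (F : 'I_n -> 'rV[R]_n -> R) x v :
  (forall i, derivable (F i) x v) -> derivable (fun y => \sum_(i < n) F i y) x v.
Proof. by move=> dF; rewrite sum_funE; exact: derivable_sum. Qed.

Lemma derivable_coord (c : 'I_n) x v : derivable (fun q : 'rV[R]_n => q 0 c) x v.
Proof. exact/diff_derivable/differentiable_coord. Qed.

Lemma derive_coord (c : 'I_n) x v : derive (fun q : 'rV[R]_n => q 0 c) x v = v 0 c.
Proof.
have @f : {linear 'rV[R]_n -> R}.
  by exists (fun N : 'rV[R]_n => N 0 c); do 2![eexists]; do ?[constructor];
     rewrite ?mxE// => ? *; rewrite ?mxE//; move=> ?; rewrite !mxE.
rewrite (_ : (fun _ => _) = f) // deriveE; last exact/linear_differentiable/coord_continuous.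
by rewrite diff_lin //; exact: coord_continuous.
Qed.

End DirectionalDerivative.

Section PartialDerivatives.
Variables (R : realType) (n : nat) (U : set 'rV[R]_n).
Local Notation fn := (fn R n).
Implicit Types (f g : fn) (F : 'I_n -> fn).

(* A record rather than a definition, so that [apply] never unfolds it. *)
Record pderivable f : Prop := PDerivable {
  pderivableP : forall x p (m : 'I_n), U x ->
    derivable (fun y => f y p) x (ev R m) /\ derivable (fun q => f x q) p (ev R m) }.

Lemma pderivableD f g : pderivable f -> pderivable g ->
  pderivable (fun y q => f y q + g y q).
Proof.
move=> [df] [dg]; constructor=> x p m Ux.
have [f1 f2] := df x p m Ux; have [g1 g2] := dg x p m Ux.
by split; [exact: derivableD f1 g1 | exact: derivableD f2 g2].
Qed.

Lemma pderivableM f g : pderivable f -> pderivable g ->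
  pderivable (fun y q => f y q * g y q).
Proof.
move=> [df] [dg]; constructor=> x p m Ux.
have [f1 f2] := df x p m Ux; have [g1 g2] := dg x p m Ux.
by split; [exact: derivableM f1 g1 | exact: derivableM f2 g2].
Qed.

Lemma pderivable_sum F : (forall i, pderivable (F i)) ->
  pderivable (fun y q => \sum_(i < n) F i y q).
Proof.
move=> dF; constructor=> x p m Ux.
by split; apply: derivable_sum_fun => i; case: (dF i) => /(_ x p m Ux) [].
Qed.

Lemma pderivable_pc (c : 'I_n) : pderivable (fun _ q => pc q c).
Proof. by constructor=> x p m _; split; [exact: derivable_cst | exact: derivable_coord]. Qed.

Lemma smooth_pderivable f (ds : seq (bool * 'I_n)) :
  smooth_on U f -> pderivable (Defs.iterD ds f).
Proof. by move=> sf; constructor=> x p m Ux; exact: (sf ds).2 m x p Ux. Qed.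

Section AtPoint.
Context {x p : 'rV[R]_n} {m : 'I_n}.
Hypothesis Ux : U x.

Let derivable_x f : pderivable f -> derivable (fun y => f y p) x (ev R m).
Proof. by move=> [df]; case: (df x p m Ux). Qed.

Let derivable_p f : pderivable f -> derivable (fun q => f x q) p (ev R m).
Proof. by move=> [df]; case: (df x p m Ux). Qed.

Lemma dxD f g : pderivable f -> pderivable g ->
  dx m (fun y q => f y q + g y q) x p = dx m f x p + dx m g x p.
Proof. by move=> df dg; apply: deriveD; apply: derivable_x. Qed.

Lemma dpD f g : pderivable f -> pderivable g ->
  dp m (fun y q => f y q + g y q) x p = dp m f x p + dp m g x p.
Proof. by move=> df dg; apply: deriveD; apply: derivable_p. Qed.

Lemma dxB f g : pderivable f -> pderivable g ->
  dx m (fun y q => f y q - g y q) x p = dx m f x p - dx m g x p.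
Proof. by move=> df dg; apply: deriveB; apply: derivable_x. Qed.

Lemma dpB f g : pderivable f -> pderivable g ->
  dp m (fun y q => f y q - g y q) x p = dp m f x p - dp m g x p.
Proof. by move=> df dg; apply: deriveB; apply: derivable_p. Qed.

Lemma dxM f g : pderivable f -> pderivable g ->
  dx m (fun y q => f y q * g y q) x p = f x p * dx m g x p + g x p * dx m f x p.
Proof. by move=> df dg; apply: deriveM; apply: derivable_x. Qed.

Lemma dpM f g : pderivable f -> pderivable g ->
  dp m (fun y q => f y q * g y q) x p = f x p * dp m g x p + g x p * dp m f x p.
Proof. by move=> df dg; apply: deriveM; apply: derivable_p. Qed.

Lemma dx_sum F : (forall i, pderivable (F i)) ->
  dx m (fun y q => \sum_(i < n) F i y q) x p = \sum_(i < n) dx m (F i) x p.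
Proof. by move=> dF; apply: derive_sum_fun => i; apply: derivable_x. Qed.

Lemma dp_sum F : (forall i, pderivable (F i)) ->
  dp m (fun y q => \sum_(i < n) F i y q) x p = \sum_(i < n) dp m (F i) x p.
Proof. by move=> dF; apply: derive_sum_fun => i; apply: derivable_p. Qed.

Lemma dx_pc (c : 'I_n) : dx m (fun _ q => pc q c) x p = 0.
Proof. exact: derive_cst. Qed.

Lemma dp_pc (c : 'I_n) : dp m (fun _ q => pc q c) x p = kdelta R c m.
Proof. by rewrite /dp /pc derive_coord /ev mxE eqxx /kdelta; case: eqP. Qed.

End AtPoint.

Lemma dp_eq_on f g x p m : U x -> (forall y q, U y -> f y q = g y q) ->
  dp m f x p = dp m g x p.
Proof.
move=> Ux fg; rewrite /dp (_ : (fun q => f x q) = (fun q => g x q)) //.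
by apply/funext => q; exact: fg.
Qed.

Lemma dx_eq_on f g x p m : open U -> U x -> (forall y q, U y -> f y q = g y q) ->
  dx m f x p = dx m g x p.
Proof.
move=> oU Ux fg; apply: near_eq_derive.
by apply: filterS (open_nbhs_nbhs (conj oU Ux)) => y Uy; exact: fg.
Qed.

End PartialDerivatives.

Ltac pderivable_tac := repeat first
  [ match goal with
    | H : forall _, pderivable _ _ |- pderivable _ _ => apply: H
    | H : forall _ _, pderivable _ _ |- pderivable _ _ => apply: H
    | H : forall _ _ _, pderivable _ _ |- pderivable _ _ => apply: H
    end
  | apply: pderivableD | apply: pderivableM
  | apply: pderivable_sum => ? | apply: pderivable_pc ].

(** * Horizontal derivative and index lowering *)

Section HorizontalDerivative.
Variables (R : realType) (n : nat) (U : set 'rV[R]_n).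
Local Notation fn := (fn R n).
Implicit Types (f h : fn) (F : 'I_n -> fn) (g t : 'I_n -> 'I_n -> fn).

(* The horizontal derivative h_m f = d f/dx^m + g_mb d f/dp_b.  Like [flowder] and
   [ucov] below it is locked, so that distributivity rewrites never unfold it. *)
Fact hder_key : unit. Proof. by []. Qed.
Definition hder : ('I_n -> 'I_n -> fn) -> 'I_n -> fn -> fn :=
  locked_with hder_key (fun g m f x p => dx m f x p + \sum_(b < n) g m b x p * dp b f x p).
Canonical hder_unlockable := [unlockable fun hder].

Lemma hderE g m f x p : hder g m f x p = dx m f x p + \sum_(b < n) g m b x p * dp b f x p.
Proof. by rewrite unlock. Qed.

Definition lower t (X : 'I_n -> fn) (i : 'I_n) : fn := fun x p =>
  \sum_(j < n) t i j x p * X j x p.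

Lemma hder_shift g t m f x p :
  hder (fun a b y q => g a b y q + t a b y q) m f x p
  = hder g m f x p + lower t (fun b => dp b f) m x p.
Proof.
rewrite !hderE -addrA; congr (_ + _).
by rewrite -big_split; apply: eq_bigr => b _; rewrite mulrDl.
Qed.

Section AtPoint.
Context {x p : 'rV[R]_n} {g : 'I_n -> 'I_n -> fn} {m : 'I_n}.
Hypothesis Ux : U x.

Lemma hderD f h : pderivable U f -> pderivable U h ->
  hder g m (fun y q => f y q + h y q) x p = hder g m f x p + hder g m h x p.
Proof.
move=> df dh; rewrite !hderE (dxD Ux df dh).
under eq_bigr => b _ do rewrite (dpD Ux df dh) mulrDr.
by rewrite big_split /=; ring.
Qed.

Lemma hderB f h : pderivable U f -> pderivable U h ->
  hder g m (fun y q => f y q - h y q) x p = hder g m f x p - hder g m h x p.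
Proof.
move=> df dh; rewrite !hderE (dxB Ux df dh).
under eq_bigr => b _ do rewrite (dpB Ux df dh) mulrBr.
by rewrite sumrB /=; ring.
Qed.

Lemma hderM f h : pderivable U f -> pderivable U h ->
  hder g m (fun y q => f y q * h y q) x p
  = f x p * hder g m h x p + h x p * hder g m f x p.
Proof.
move=> df dh; rewrite !hderE (dxM Ux df dh).
under eq_bigr => b _ do rewrite (dpM Ux df dh) mulrDr mulrCA [X in _ + X]mulrCA.
by rewrite big_split /= -!mulr_sumr; ring.
Qed.

Lemma hder_sum F : (forall i, pderivable U (F i)) ->
  hder g m (fun y q => \sum_(i < n) F i y q) x p = \sum_(i < n) hder g m (F i) x p.
Proof.
move=> dF; rewrite hderE (dx_sum Ux dF).
under [in RHS]eq_bigr => i _ do rewrite hderE.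
rewrite big_split /= [in RHS]exchange_big.
congr (_ + _); apply: eq_bigr => b _.
by rewrite (dp_sum Ux dF) mulr_sumr.
Qed.

Lemma dp_lower t X i : (forall a b, pderivable U (t a b)) ->
  (forall j, pderivable U (X j)) ->
  dp m (lower t X i) x p
  = lower (fun a b => dp m (t a b)) X i x p + lower t (fun j => dp m (X j)) i x p.
Proof.
move=> dt dX; rewrite /lower (dp_sum Ux); last by move=> j; pderivable_tac.
rewrite -big_split; apply: eq_bigr => j _.
by rewrite (dpM Ux (dt i j) (dX j)) addrC mulrC.
Qed.

Lemma hder_lower t X i : (forall a b, pderivable U (t a b)) ->
  (forall j, pderivable U (X j)) ->
  hder g m (lower t X i) x p
  = lower (fun a b => hder g m (t a b)) X i x p + lower t (fun j => hder g m (X j)) i x p.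
Proof.
move=> dt dX; rewrite /lower hder_sum; last by move=> j; pderivable_tac.
rewrite -big_split; apply: eq_bigr => j _.
by rewrite (hderM (dt i j) (dX j)) addrC mulrC.
Qed.

End AtPoint.

Lemma pderivable_lower t X i : (forall a b, pderivable U (t a b)) ->
  (forall j, pderivable U (X j)) -> pderivable U (lower t X i).
Proof. by move=> dt dX; rewrite /lower; pderivable_tac. Qed.

Lemma hder_eq_on g m f h x p : open U -> U x -> (forall y q, U y -> f y q = h y q) ->
  hder g m f x p = hder g m h x p.
Proof.
move=> oU Ux fh; rewrite !hderE (dx_eq_on _ _ oU Ux fh); congr (_ + _).
by apply: eq_bigr => b _; rewrite (dp_eq_on _ _ Ux fh).
Qed.

Lemma pderivable_hder g m f : (forall a b, pderivable U (g a b)) ->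
  pderivable U (dx m f) -> (forall b, pderivable U (dp b f)) -> pderivable U (hder g m f).
Proof. by move=> dg dfx dfp; rewrite [hder]unlock; pderivable_tac. Qed.

End HorizontalDerivative.

(** * Flow derivative and the shift of the contracted connection *)

Section ContractedConnection.
Variables (R : realType) (n : nat) (U : set 'rV[R]_n).
Local Notation fn := (fn R n).
Implicit Types (g t : 'I_n -> 'I_n -> fn) (V Q X Y : 'I_n -> fn) (f : fn).

Lemma sum_lower_sym t X Y x p : (forall a b, t a b x p = t b a x p) ->
  \sum_(r < n) X r x p * lower t Y r x p = \sum_(r < n) lower t X r x p * Y r x p.
Proof.
move=> tsym; rewrite /lower (sum_contract_sym (fun r => X r x p) (fun r => Y r x p) tsym).
by apply: eq_bigr => r _; rewrite mulrC.
Qed.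

(* Derivative along the Newtonian system  x' = V,  p'_i = g_ij V^j + Q_i. *)
Fact flowder_key : unit. Proof. by []. Qed.
Definition flowder : ('I_n -> 'I_n -> fn) -> ('I_n -> fn) -> ('I_n -> fn) -> fn -> fn :=
  locked_with flowder_key (fun g V Q f x p =>
    \sum_(r < n) V r x p * hder g r f x p + \sum_(r < n) Q r x p * dp r f x p).
Canonical flowder_unlockable := [unlockable fun flowder].

Lemma flowderE g V Q f x p : flowder g V Q f x p
  = \sum_(r < n) V r x p * hder g r f x p + \sum_(r < n) Q r x p * dp r f x p.
Proof. by rewrite unlock. Qed.

(* [ucov], [alphag] and [betag] are U, alpha and beta of the paper for a symmetric
   connection, written through g_ab = p_c Gamma^c_ab (see [Uc_ucov], [alpha_alphag]
   and [beta_betag]). *)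
Fact ucov_key : unit. Proof. by []. Qed.
Definition ucov : ('I_n -> 'I_n -> fn) -> ('I_n -> fn) -> ('I_n -> fn) -> 'I_n -> fn :=
  locked_with ucov_key (fun g V Q k x p =>
    \sum_(r < n) hder g k (V r) x p * pc p r + \sum_(a < n) g k a x p * V a x p + Q k x p).
Canonical ucov_unlockable := [unlockable fun ucov].

Lemma ucovE g V Q k x p : ucov g V Q k x p
  = \sum_(r < n) hder g k (V r) x p * pc p r + \sum_(a < n) g k a x p * V a x p + Q k x p.
Proof. by rewrite unlock. Qed.

Definition alphag g V Q (k : 'I_n) : fn := fun x p =>
  \sum_(r < n) ucov g V Q r x p * dp k (V r) x p
  + flowder g V Q (Wv V k) x p
  + \sum_(r < n) Wv V r x p * dp k (Q r) x p
  + \sum_(r < n) \sum_(q < n) Wv V r x p * V q x p * dp k (g r q) x p.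

Definition betag g V Q (k : 'I_n) : fn := fun x p =>
  flowder g V Q (ucov g V Q k) x p
  + \sum_(r < n) ucov g V Q r x p * hder g k (V r) x p
  + \sum_(r < n) Wv V r x p * hder g k (Q r) x p
  + \sum_(r < n) \sum_(m < n) hder g k (g r m) x p * V m x p * Wv V r x p
  - \sum_(r < n) Wv V r x p * flowder g V Q (g k r) x p.

Section FlowDerivative.
Context {g : 'I_n -> 'I_n -> fn} {V Q : 'I_n -> fn} {x p : 'rV[R]_n}.
Hypothesis Ux : U x.

Lemma flowderD f h : pderivable U f -> pderivable U h ->
  flowder g V Q (fun y q => f y q + h y q) x p
  = flowder g V Q f x p + flowder g V Q h x p.
Proof.
move=> df dh; rewrite !flowderE.
under eq_bigr => r _ do rewrite (hderD Ux df dh) mulrDr.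
under [X in _ + X = _]eq_bigr => r _ do rewrite (dpD Ux df dh) mulrDr.
by rewrite !big_split /=; ring.
Qed.

Lemma flowderM f h : pderivable U f -> pderivable U h ->
  flowder g V Q (fun y q => f y q * h y q) x p
  = f x p * flowder g V Q h x p + h x p * flowder g V Q f x p.
Proof.
move=> df dh; rewrite !flowderE.
under eq_bigr => r _ do rewrite (hderM Ux df dh) mulrDr mulrCA [X in _ + X]mulrCA.
under [X in _ + X = _]eq_bigr => r _ do
  rewrite (dpM Ux df dh) mulrDr mulrCA [X in _ + X]mulrCA.
by rewrite !big_split /= -!mulr_sumr; ring.
Qed.

Lemma flowder_sum F : (forall i, pderivable U (F i)) ->
  flowder g V Q (fun y q => \sum_(i < n) F i y q) x p
  = \sum_(i < n) flowder g V Q (F i) x p.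
Proof.
move=> dF; rewrite flowderE.
under [in RHS]eq_bigr => i _ do rewrite flowderE.
rewrite big_split /= [in RHS]exchange_big [X in _ = _ + X]exchange_big.
congr (_ + _); apply: eq_bigr => r _.
  by rewrite (hder_sum Ux dF) mulr_sumr.
by rewrite (dp_sum Ux dF) mulr_sumr.
Qed.

Lemma flowder_lower t X i : (forall a b, pderivable U (t a b)) ->
  (forall j, pderivable U (X j)) ->
  flowder g V Q (lower t X i) x p
  = lower (fun a b => flowder g V Q (t a b)) X i x p
    + lower t (fun j => flowder g V Q (X j)) i x p.
Proof.
move=> dt dX; rewrite /lower flowder_sum; last by move=> j; pderivable_tac.
rewrite -big_split; apply: eq_bigr => j _.
by rewrite (flowderM (dt i j) (dX j)) addrC mulrC.
Qed.

End FlowDerivative.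

Section Shift.
Variables (g t : 'I_n -> 'I_n -> fn) (V Q : 'I_n -> fn).
Hypotheses (dg : forall a b, pderivable U (g a b)) (dt : forall a b, pderivable U (t a b))
  (dV : forall i, pderivable U (V i)) (dQ : forall i, pderivable U (Q i))
  (dVx : forall m i, pderivable U (dx m (V i))) (dVp : forall m i, pderivable U (dp m (V i))).

Local Notation g' := (fun a b y q => g a b y q + t a b y q).
Local Notation Q' := (fun i y q => Q i y q - lower t V i y q).

Let dW b : pderivable U (Wv V b).
Proof. by rewrite /Wv; pderivable_tac. Qed.

Let dZ i : pderivable U (lower t V i).
Proof. exact: pderivable_lower. Qed.

Let dU i : pderivable U (ucov g V Q i).
Proof.
rewrite [ucov]unlock; pderivable_tac; apply: pderivable_hder => //; pderivable_tac.
Qed.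

Let dE i : pderivable U (lower t (Wv V) i).
Proof. exact: pderivable_lower. Qed.

Lemma ucov_shift :
  ucov g' V Q' = fun k y q => ucov g V Q k y q + lower t (Wv V) k y q.
Proof.
apply/funext => k; apply/funext => y; apply/funext => q.
rewrite !ucovE.
under eq_bigr => r _ do rewrite hder_shift mulrDl.
under [X in _ + X + _ = _]eq_bigr => a _ do rewrite mulrDl.
rewrite !big_split /=.
have -> : \sum_(r < n) lower t (fun b => dp b (V r)) k y q * pc q r = lower t (Wv V) k y q.
  exact: sum_contractA.
by rewrite /lower; ring.
Qed.

Section AtPoint.
Variables (x p : 'rV[R]_n).
Hypotheses (Ux : U x) (tsym : forall a b, t a b x p = t b a x p).

Lemma flowder_shift f : flowder g' V Q' f x p = flowder g V Q f x p.
Proof.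
rewrite !flowderE.
under eq_bigr => r _ do rewrite hder_shift mulrDr.
under [X in _ + X = _]eq_bigr => r _ do rewrite mulrBl.
rewrite big_split sumrB /= (sum_lower_sym V (fun b => dp b f) tsym).
ring.
Qed.

Lemma alphag_shift k : alphag g' V Q' k x p = alphag g V Q k x p.
Proof.
have dQ' r : dp k (Q' r) x p = dp k (Q r) x p
    - lower (fun a b => dp k (t a b)) V r x p - lower t (fun j => dp k (V j)) r x p.
  by rewrite (dpB Ux (dQ r) (dZ r)) (dp_lower Ux _ dt dV) opprD addrA.
have dg' r q : dp k (g' r q) x p = dp k (g r q) x p + dp k (t r q) x p.
  exact: (dpD Ux (dg r q) (dt r q)).
rewrite /alphag ucov_shift flowder_shift /=.
under eq_bigr => r _ do rewrite mulrDl.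
under [X in _ + _ + X + _ = _]eq_bigr => r _ do rewrite dQ' !mulrBr.
under [X in _ + X = _]eq_bigr => r _ do
  (under eq_bigr => q _ do rewrite dg' mulrDr; rewrite big_split).
rewrite !big_split !sumrN /=.
rewrite (sum_lower_sym (Wv V) (fun j => dp k (V j)) tsym) /=.
have -> : \sum_(r < n) Wv V r x p * lower (fun a b => dp k (t a b)) V r x p
          = \sum_(r < n) \sum_(q < n) Wv V r x p * V q x p * dp k (t r q) x p.
  by apply: eq_bigr => r _; rewrite /lower mulr_sumr; apply: eq_bigr => q _; ring.
ring.
Qed.

Lemma sum_alphag_lower k : \sum_(r < n) t k r x p * alphag g V Q r x p
  = \sum_(i < n) ucov g V Q i x p * lower t (fun b => dp b (V i)) k x p
    + lower t (fun j => flowder g V Q (Wv V j)) k x p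
    + \sum_(i < n) Wv V i x p * lower t (fun b => dp b (Q i)) k x p
    + \sum_(i < n) \sum_(j < n) lower t (fun b => dp b (g i j)) k x p * V j x p * Wv V i x p.
Proof.
rewrite /alphag /lower; under eq_bigr => r _ do rewrite !mulrDr.
rewrite !big_split /= [X in X + _ + _ + _ = _]sum_contract_swap.
rewrite [X in _ + _ + X + _ = _]sum_contract_swap; congr (_ + _).
under [RHS]eq_bigr => i _ do
  (under eq_bigr => j _ do rewrite 2!mulr_suml; rewrite exchange_big).
rewrite [RHS]exchange_big; apply: eq_bigr => b _; rewrite mulr_sumr.
apply: eq_bigr => i _; rewrite mulr_sumr.
by apply: eq_bigr => j _; ring.
Qed.

Lemma sum_lower_dp_Q' k :
  \sum_(r < n) Wv V r x p * lower t (fun b => dp b (Q' r)) k x p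
  = \sum_(r < n) Wv V r x p * lower t (fun b => dp b (Q r)) k x p
    - \sum_(r < n) \sum_(j < n) lower t (fun b => dp b (t r j)) k x p * V j x p * Wv V r x p
    - \sum_(r < n) Wv V r x p * \sum_(b < n) t k b x p * lower t (fun j => dp b (V j)) r x p.
Proof.
rewrite -!sumrB; apply: eq_bigr => r _.
have -> : lower t (fun b => dp b (Q' r)) k x p = lower t (fun b => dp b (Q r)) k x p
    - \sum_(b < n) t k b x p * lower (fun a c => dp b (t a c)) V r x p
    - \sum_(b < n) t k b x p * lower t (fun j => dp b (V j)) r x p.
  rewrite {1 2}/lower -!sumrB; apply: eq_bigr => b _.
  by rewrite (dpB Ux (dQ r) (dZ r)) (dp_lower Ux _ dt dV); ring.
rewrite !mulrBr; congr (_ - _ - _); rewrite /lower mulr_sumr.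
under eq_bigr => b _ do rewrite 2!mulr_sumr.
rewrite [LHS]exchange_big; apply: eq_bigr => j _; rewrite 2!mulr_suml.
by apply: eq_bigr => b _; ring.
Qed.

Lemma hder_shift_g' k r m : hder g' k (g' r m) x p
  = hder g k (g r m) x p + hder g k (t r m) x p
    + lower t (fun b => dp b (g r m)) k x p + lower t (fun b => dp b (t r m)) k x p.
Proof.
rewrite hder_shift (hderD Ux (dg r m) (dt r m)) -[in RHS]addrA; congr (_ + _).
rewrite /lower -big_split; apply: eq_bigr => b _.
by rewrite (dpD Ux (dg r m) (dt r m)) mulrDr.
Qed.

Lemma betag_shift k :
  betag g' V Q' k x p = betag g V Q k x p + \sum_(r < n) t k r x p * alphag g V Q r x p.
Proof.
have F1 : flowder g V Q (fun y q => ucov g V Q k y q + lower t (Wv V) k y q) x p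
    = flowder g V Q (ucov g V Q k) x p
      + lower (fun a b => flowder g V Q (t a b)) (Wv V) k x p
      + lower t (fun j => flowder g V Q (Wv V j)) k x p.
  by rewrite (flowderD Ux (dU k) (dE k)) (flowder_lower Ux) // addrA.
have F5 r : flowder g V Q (g' k r) x p
    = flowder g V Q (g k r) x p + flowder g V Q (t k r) x p.
  exact: (flowderD Ux (dg k r) (dt k r)).
have H3 r : hder g' k (Q' r) x p = hder g k (Q r) x p
    - lower (fun a b => hder g k (t a b)) V r x p - lower t (fun j => hder g k (V j)) r x p
    + lower t (fun b => dp b (Q' r)) k x p.
  by rewrite hder_shift (hderB Ux (dQ r) (dZ r)) (hder_lower Ux _ dt dV) opprD addrA.
(* Once the primed terms are expanded, the terms of t_kr alpha^r appear as in
   [sum_alphag_lower]; all other new terms cancel in pairs by the symmetry of t. *)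
rewrite /betag ucov_shift !flowder_shift /= F1 sum_alphag_lower.
under eq_bigr => r _ do rewrite hder_shift mulrDl ?mulrDr.
under [X in _ + X + _ - _ = _]eq_bigr => r _ do rewrite H3 ?(mulrDr, mulrBr, mulrN).
under [X in _ + X - _ = _]eq_bigr => r _ do
  (under eq_bigr => m _ do rewrite hder_shift_g' ?mulrDl; rewrite ?big_split).
under [X in _ - X = _]eq_bigr => r _ do rewrite flowder_shift F5 mulrDr.
rewrite ?big_split ?sumrB ?sumrN /= sum_lower_dp_Q'.
have -> : lower (fun a b => flowder g V Q (t a b)) (Wv V) k x p
    = \sum_(i < n) Wv V i x p * flowder g V Q (t k i) x p.
  by apply: eq_bigr => i _; rewrite mulrC.
have -> : \sum_(i < n) lower t (Wv V) i x p * hder g k (V i) x p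
    = \sum_(i < n) Wv V i x p * lower t (fun j => hder g k (V j)) i x p.
  by rewrite sum_lower_sym.
have -> : \sum_(i < n) lower t (Wv V) i x p * lower t (fun b => dp b (V i)) k x p
    = \sum_(i < n) Wv V i x p * \sum_(b < n) t k b x p * lower t (fun j => dp b (V j)) i x p.
  rewrite -(sum_lower_sym (Wv V) (fun i => lower t (fun b => dp b (V i)) k) tsym).
  by apply: eq_bigr => i _; congr (_ * _); apply: sum_contract_swap.
have -> : \sum_(i < n) Wv V i x p * lower (fun a b => hder g k (t a b)) V i x p
    = \sum_(i < n) \sum_(j < n) hder g k (t i j) x p * V j x p * Wv V i x p.
  apply: eq_bigr => i _; rewrite /lower mulr_sumr.
  by apply: eq_bigr => j _; ring.
ring.
Qed.

End AtPoint.
End Shift.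
End ContractedConnection.

(** * Reduction to the contracted connection *)

Section Reduction.
Variables (R : realType) (n : nat) (U : set 'rV[R]_n).
Local Notation fn := (fn R n).
Implicit Types (Gam T : 'I_n -> 'I_n -> 'I_n -> fn) (V Q X : 'I_n -> fn).

Definition pcon Gam (a b : 'I_n) : fn := fun x p => \sum_(c < n) pc p c * Gam c a b x p.

Lemma pconD Gam T :
  pcon (fun k i j y q => Gam k i j y q + T k i j y q)
  = fun a b y q => pcon Gam a b y q + pcon T a b y q.
Proof.
apply/funext => a; apply/funext => b; apply/funext => y; apply/funext => q.
by rewrite /pcon -big_split; apply: eq_bigr => c _; rewrite mulrDr.
Qed.

Lemma nabla_vecE Gam m X i x p :
  nabla_vec Gam m X i x p = hder (pcon Gam) m (X i) x p + \sum_(a < n) Gam i m a x p * X a x p.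
Proof.
rewrite /nabla_vec hderE; congr (_ + _ + _); apply: eq_bigr => b _.
by rewrite /pcon mulr_suml.
Qed.

Lemma nabla_covE Gam m X j x p :
  nabla_cov Gam m X j x p = hder (pcon Gam) m (X j) x p - \sum_(b < n) Gam b m j x p * X b x p.
Proof.
rewrite /nabla_cov hderE; congr (_ + _ - _); apply: eq_bigr => b _.
by rewrite /pcon mulr_suml.
Qed.

Lemma Uc_ucov Gam V Q : Uc Gam V Q = ucov (pcon Gam) V Q.
Proof.
apply/funext => k; apply/funext => x; apply/funext => p.
rewrite ucovE /Uc; under eq_bigr => r _ do rewrite nabla_vecE mulrDl.
rewrite big_split /=; congr (_ + _ + _).
rewrite /pcon; under eq_bigr => r _ do rewrite mulr_suml.
rewrite exchange_big; apply: eq_bigr => a _; rewrite mulr_suml.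
by apply: eq_bigr => c _; ring.
Qed.

Lemma pderivable_pcon Gam a b : (forall k i j, pderivable U (Gam k i j)) ->
  pderivable U (pcon Gam a b).
Proof. by move=> dGam; rewrite /pcon; pderivable_tac. Qed.

Section AtPoint.
Context {Gam : 'I_n -> 'I_n -> 'I_n -> fn} {x p : 'rV[R]_n}.
Hypotheses (dGam : forall k i j, pderivable U (Gam k i j)) (Ux : U x).

Lemma dx_pcon m a b : dx m (pcon Gam a b) x p = \sum_(c < n) pc p c * dx m (Gam c a b) x p.
Proof.
rewrite /pcon (dx_sum Ux); last by move=> c; pderivable_tac.
apply: eq_bigr => c _.
by rewrite (dxM Ux (pderivable_pc _ c) (dGam c a b)) dx_pc mulr0 addr0.
Qed.

Lemma dp_pcon m a b :
  dp m (pcon Gam a b) x p = \sum_(c < n) pc p c * dp m (Gam c a b) x p + Gam m a b x p.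
Proof.
rewrite /pcon (dp_sum Ux); last by move=> c; pderivable_tac.
under eq_bigr => c _ do rewrite (dpM Ux (pderivable_pc _ c) (dGam c a b)) dp_pc.
rewrite big_split /=; congr (_ + _).
rewrite (bigD1 m) //= /kdelta eqxx mulr1 big1 ?addr0 // => c /negbTE ->.
by rewrite mulr0.
Qed.

Lemma Dt_pcon r m k : \sum_(s < n) pc p s * Dt Gam s m r k x p
  = Gam m r k x p - dp m (pcon Gam r k) x p.
Proof.
rewrite dp_pcon opprD addrC subrK -sumrN.
by apply: eq_bigr => s _; rewrite /Dt mulrN.
Qed.

Section PointSymmetric.
Hypothesis Gsym : forall k i j, Gam k i j x p = Gam k j i x p.

Lemma hder_pcon m k r : hder (pcon Gam) m (pcon Gam k r) x p
  = \sum_(s < n) pc p s * (dx m (Gam s k r) x p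
      + \sum_(q < n) Gam s m q x p * Gam q k r x p
      + \sum_(q < n) \sum_(a < n) pc p a * Gam a q m x p * dp q (Gam s k r) x p).
Proof.
rewrite hderE dx_pcon.
under [X in _ + X = _]eq_bigr => b _ do rewrite dp_pcon mulrDr.
rewrite big_split /=.
under [in RHS]eq_bigr => s _ do rewrite !mulrDr.
rewrite !big_split /= -addrA; congr (_ + _); rewrite addrC; congr (_ + _).
  exact: sum_contractA.
rewrite sum_contract_swap; apply: eq_bigr => s _; congr (_ * _); apply: eq_bigr => q _.
by rewrite /pcon mulr_suml; apply: eq_bigr => a _; rewrite Gsym.
Qed.

Lemma curv_pcon r m k : \sum_(s < n) pc p s * curv Gam s r m k x p
  = hder (pcon Gam) m (pcon Gam k r) x p - hder (pcon Gam) k (pcon Gam m r) x p.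
Proof. by rewrite !hder_pcon -sumrB; apply: eq_bigr => s _; rewrite /curv; ring. Qed.

Lemma alpha_alphag V Q k : alpha Gam V Q k x p = alphag (pcon Gam) V Q k x p.
Proof.
have HD : \sum_(r < n) \sum_(s < n) \sum_(q < n)
      pc p s * Dt Gam s k r q x p * Wv V r x p * V q x p
    = \sum_(r < n) \sum_(q < n) Gam k r q x p * Wv V r x p * V q x p
      - \sum_(r < n) \sum_(q < n) Wv V r x p * V q x p * dp k (pcon Gam r q) x p.
  rewrite -sumrB; apply: eq_bigr => r _; rewrite -sumrB exchange_big; apply: eq_bigr => q _.
  by rewrite -2!mulr_suml Dt_pcon; ring.
have HG : \sum_(r < n) V r x p * \sum_(a < n) Gam k r a x p * Wv V a x p
    = \sum_(r < n) \sum_(q < n) Gam k r q x p * Wv V r x p * V q x p.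
  under eq_bigr => r _ do rewrite mulr_sumr.
  rewrite [LHS]exchange_big; apply: eq_bigr => r _; apply: eq_bigr => q _.
  by rewrite Gsym; ring.
rewrite /alpha /alphag flowderE Uc_ucov HD.
under eq_bigr => r _ do rewrite mulrC.
under [X in _ + X + _ + _ - _ = _]eq_bigr => r _ do rewrite nabla_vecE mulrDr.
rewrite big_split /= HG; ring.
Qed.

End PointSymmetric.

Hypotheses (oU : open U) (GsymU : forall k i j y q, U y -> Gam k i j y q = Gam k j i y q).

Lemma beta_betag V Q k : beta Gam V Q k x p = betag (pcon Gam) V Q k x p.
Proof.
have Gsym a b c : Gam a b c x p = Gam a c b x p by exact: GsymU.
have pcon_sym a b y q : U y -> pcon Gam a b y q = pcon Gam b a y q.
  by move=> Uy; apply: eq_bigr => c _; rewrite GsymU.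
have HC : \sum_(r < n) \sum_(s < n) \sum_(m < n)
      (curv Gam s r m k x p * V m x p - Dt Gam s m r k x p * Q m x p) * Wv V r x p * pc p s
    = \sum_(r < n) Wv V r x p * flowder (pcon Gam) V Q (pcon Gam k r) x p
      - \sum_(r < n) \sum_(m < n) hder (pcon Gam) k (pcon Gam r m) x p * V m x p * Wv V r x p
      - \sum_(r < n) \sum_(m < n) Gam m r k x p * Q m x p * Wv V r x p.
  rewrite -!sumrB; apply: eq_bigr => r _; rewrite [LHS]exchange_big flowderE mulrDr !mulr_sumr.
  rewrite -big_split -!sumrB; apply: eq_bigr => m _ /=.
  rewrite (hder_eq_on _ _ _ oU Ux (pcon_sym r m)) (dp_eq_on _ _ Ux (pcon_sym k r)).
  transitivity ((\sum_(s < n) pc p s * curv Gam s r m k x p) * V m x p * Wv V r x p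
                - (\sum_(s < n) pc p s * Dt Gam s m r k x p) * Q m x p * Wv V r x p).
    by rewrite !mulr_suml -sumrB; apply: eq_bigr => s _; ring.
  by rewrite (curv_pcon Gsym) Dt_pcon; ring.
have G1 : \sum_(r < n) V r x p * \sum_(b < n) Gam b r k x p * ucov (pcon Gam) V Q b x p
    = \sum_(r < n) ucov (pcon Gam) V Q r x p * \sum_(a < n) Gam r k a x p * V a x p.
  under eq_bigr => r _ do rewrite mulr_sumr.
  rewrite [LHS]exchange_big; apply: eq_bigr => r _; rewrite mulr_sumr.
  by apply: eq_bigr => a _; rewrite Gsym; ring.
have G2 : \sum_(r < n) Wv V r x p * \sum_(b < n) Gam b k r x p * Q b x p
    = \sum_(r < n) \sum_(m < n) Gam m r k x p * Q m x p * Wv V r x p.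
  apply: eq_bigr => r _; rewrite mulr_sumr.
  by apply: eq_bigr => m _; rewrite Gsym; ring.
rewrite /beta /betag Uc_ucov flowderE HC.
under eq_bigr => r _ do rewrite nabla_covE mulrBr.
under [X in _ + _ + X + _ - _ = _]eq_bigr => r _ do rewrite nabla_vecE mulrDr.
under [X in _ + X - _ = _]eq_bigr => r _ do rewrite nabla_covE mulrBr.
rewrite !big_split !sumrN /= G1 G2; ring.
Qed.

End AtPoint.
End Reduction.

(** * Change of the connection *)

Lemma sum_mul_Pm (R : realType) n (V : 'I_n -> fn R n) (a : 'I_n -> R) r x p :
  \sum_(j < n) a j * Pm V r j x p
  = a r - Wv V r x p * (\sum_(j < n) a j * pc p j) / Omega V x p.
Proof.
rewrite /Pm; under eq_bigr => j _ do rewrite mulrBr.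
rewrite sumrB (bigD1 r) //= /kdelta eqxx mulr1 big1 ?addr0; last first.
  by move=> j /negbTE; rewrite eq_sym => ->; rewrite mulr0.
congr (_ - _); rewrite mulr_sumr mulr_suml; apply: eq_bigr => j _; ring.
Qed.

Section Change.
Variables (R : realType) (n : nat) (U : set 'rV[R]_n).
Variables (Gam T : 'I_n -> 'I_n -> 'I_n -> fn R n) (V Q : 'I_n -> fn R n).
Hypotheses (oU : open U)
  (dGam : forall k i j, pderivable U (Gam k i j)) (dT : forall k i j, pderivable U (T k i j))
  (dV : forall i, pderivable U (V i)) (dQ : forall i, pderivable U (Q i))
  (dVx : forall m i, pderivable U (dx m (V i))) (dVp : forall m i, pderivable U (dp m (V i)))
  (Gsym : forall k i j x p, U x -> Gam k i j x p = Gam k j i x p)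
  (Tsym : forall k i j x p, U x -> T k i j x p = T k j i x p).

Local Notation Gam' := (fun k i j x p => Gam k i j x p + T k i j x p).
Local Notation Q' := (fun i x p => Q i x p
      - \sum_(k < n) \sum_(s < n) T k i s x p * pc p k * V s x p).

Lemma Q'_lower : Q' = fun i x p => Q i x p - lower (pcon T) V i x p.
Proof.
apply/funext => i; apply/funext => x; apply/funext => p; congr (_ - _).
rewrite /lower /pcon exchange_big; apply: eq_bigr => s _; rewrite mulr_suml.
by apply: eq_bigr => c _; ring.
Qed.

Let dGam' k i j : pderivable U (Gam' k i j).
Proof. exact: pderivableD. Qed.

Let Gsym' k i j x p : U x -> Gam' k i j x p = Gam' k j i x p.
Proof. by move=> Ux /=; rewrite Gsym // Tsym. Qed.

Let dpconGam a b : pderivable U (pcon Gam a b).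
Proof. exact: pderivable_pcon. Qed.

Let dpconT a b : pderivable U (pcon T a b).
Proof. exact: pderivable_pcon. Qed.

Lemma Uc_shift : Uc Gam' V Q' = fun k y q => Uc Gam V Q k y q + lower (pcon T) (Wv V) k y q.
Proof. by rewrite !Uc_ucov pconD Q'_lower ucov_shift. Qed.

Section AtPoint.
Context {x p : 'rV[R]_n}.
Hypothesis Ux : U x.

Let pconT_sym a b : pcon T a b x p = pcon T b a x p.
Proof. by apply: eq_bigr => c _; rewrite Tsym. Qed.

Let Gsym_at k i j : Gam k i j x p = Gam k j i x p.
Proof. exact: Gsym. Qed.

Let Gsym'_at k i j : Gam' k i j x p = Gam' k j i x p.
Proof. exact: Gsym'. Qed.

Lemma alpha_shift k : alpha Gam' V Q' k x p = alpha Gam V Q k x p.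
Proof.
rewrite (alpha_alphag dGam' Ux Gsym'_at) pconD Q'_lower.
by rewrite (alphag_shift dpconGam dpconT dV dQ Ux pconT_sym) (alpha_alphag dGam Ux Gsym_at).
Qed.

Lemma beta_shift k : beta Gam' V Q' k x p
  = beta Gam V Q k x p + \sum_(r < n) pcon T k r x p * alpha Gam V Q r x p.
Proof.
rewrite (beta_betag dGam' Ux oU Gsym') pconD Q'_lower.
rewrite (betag_shift dpconGam dpconT dV dQ dVx dVp Ux pconT_sym) (beta_betag dGam Ux oU Gsym).
congr (_ + _); apply: eq_bigr => r _.
by rewrite (alpha_alphag dGam Ux Gsym_at).
Qed.

Lemma eta_shift k : Defs.eta Gam' V Q' k x p = Defs.eta Gam V Q k x p
  + \sum_(r < n) pcon T k r x p * \sum_(j < n) alpha Gam V Q j x p * Pm V r j x p.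
Proof.
rewrite /Defs.eta beta_shift Uc_shift /lower.
have -> : \sum_(s < n) alpha Gam' V Q' s x p * pc p s
    = \sum_(s < n) alpha Gam V Q s x p * pc p s.
  by apply: eq_bigr => s _; rewrite alpha_shift.
under [X in _ = _ + X]eq_bigr => r _ do rewrite sum_mul_Pm.
set S := \sum_(s < n) alpha Gam V Q s x p * pc p s.
have -> : \sum_(r < n) pcon T k r x p * (alpha Gam V Q r x p - Wv V r x p * S / Omega V x p)
    = \sum_(r < n) pcon T k r x p * alpha Gam V Q r x p
      - (\sum_(r < n) pcon T k r x p * Wv V r x p) * S / Omega V x p.
  by rewrite 2!mulr_suml -sumrB; apply: eq_bigr => r _; ring.
ring.
Qed.

Lemma weak_normal_at_shift : weak_normal_at Gam V Q x p <-> weak_normal_at Gam' V Q' x p.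
Proof.
have A k : \sum_(r < n) alpha Gam' V Q' r x p * Pm V k r x p
    = \sum_(r < n) alpha Gam V Q r x p * Pm V k r x p.
  by apply: eq_bigr => r _; rewrite alpha_shift.
have E : (forall q, \sum_(j < n) alpha Gam V Q j x p * Pm V q j x p = 0) ->
    forall k, \sum_(r < n) Defs.eta Gam' V Q' r x p * Pm V r k x p
              = \sum_(r < n) Defs.eta Gam V Q r x p * Pm V r k x p.
  move=> A0 k; apply: eq_bigr => r _.
  by rewrite eta_shift big1 ?addr0 // => q _; rewrite A0 mulr0.
split=> H k.
- have A0 q := (H q).1.
  by rewrite A E //; exact: H.
- have A0 q : \sum_(j < n) alpha Gam V Q j x p * Pm V q j x p = 0.
    by rewrite -A; exact: (H q).1.
  by rewrite -A -E //; exact: H.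
Qed.

End AtPoint.
End Change.

Theorem theorem13p1 (R : realType) (n : nat) (U : set 'rV[R]_n)
  (Gam : 'I_n -> 'I_n -> 'I_n -> fn R n) (V Q : 'I_n -> fn R n)
  (T : 'I_n -> 'I_n -> 'I_n -> fn R n) :
  (2 <= n)%N -> open U ->
  sym_connection U Gam -> regular U V ->
  (forall i, smooth_on U (Q i)) ->
  (forall k i j, smooth_on U (T k i j)) ->
  (forall k i j x p, U x -> T k i j x p = T k j i x p) ->
  let Gam' := fun k i j x p => Gam k i j x p + T k i j x p in
  let Q' := fun i x p => Q i x p
      - \sum_(k < n) \sum_(s < n) T k i s x p * pc p k * V s x p in
  (forall x p, U x -> p != 0 -> weak_normal_at Gam V Q x p) <->
  (forall x p, U x -> p != 0 -> weak_normal_at Gam' V Q' x p).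
Proof.
(* The equivalence holds pointwise. *)
move=> _ oU [sGam Gsym] [sV _] sQ sT Tsym Gam' Q'; rewrite {}/Gam' {}/Q'.
have shift := weak_normal_at_shift oU
  (fun k i j => smooth_pderivable [::] (sGam k i j))
  (fun k i j => smooth_pderivable [::] (sT k i j))
  (fun i => smooth_pderivable [::] (sV i)) (fun i => smooth_pderivable [::] (sQ i))
  (fun m i => smooth_pderivable [:: (true, m)] (sV i))
  (fun m i => smooth_pderivable [:: (false, m)] (sV i)) Gsym Tsym.
split=> H x p Ux p0; have [to from] := shift x p Ux.
  exact: to (H x p Ux p0).
exact: from (H x p Ux p0).
Qed.
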